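(* Let $0<\varepsilon<1$, let $d \geq 14/\varepsilon$, and let $S \subseteq I_3^d$ be an $\varepsilon$-sparse set with $|S| \leq 2^{\varepsilon d/4}$. Then there exists a $d$-dimensional polystochastic matrix $A$ of order $3$ such that $\mathrm{supp}(A) = I_3^d \setminus S$.
   Context: $I_3^d = \{1,2,3\}^d$. A $d$-dimensional matrix of order $3$ is an array $A = (a_\alpha)_{\alpha \in I_3^d}$ of reals; a line is the set of entries obtained by fixing all but one coordinate of the index; $A$ is polystochastic if all entries are nonnegative and each line sums to $1$. $\mathrm{supp}(A) = \{\alpha : a_\alpha \neq 0\}$. For $\alpha,\beta \in I_3^d$, $\rho(\alpha,\beta)$ is the Hamming distance. For $\alpha \in I_3^d$ let $T_\alpha = \{\beta \in I_3^d : \rho(\alpha,\beta) = d\}$. For $0<\varepsilon<1$, a set $S \subseteq I_3^d$ is $\varepsilon$-sparse if (1) $\rho(\alpha,\beta) \geq \varepsilon d$ for all distinct $\alpha,\beta \in S$, and (2) for every $\alpha \in S$ there is $\gamma_\alpha \in I_3^d$ with $T_{\gamma_\alpha} \cap S = \{\alpha\}$. *)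

From mathcomp Require Import all_boot all_order all_algebra.
From mathcomp Require Import all_classical all_reals all_analysis.
Set Implicit Arguments. Unset Strict Implicit. Unset Printing Implicit Defensive.
Import Order.TTheory GRing.Theory Num.Theory.
Local Open Scope ring_scope.

(* Indices: I_3^d, coordinates 0..2 stand for 1..3. *)
Definition idx (d : nat) := {ffun 'I_d -> 'I_3}.

Definition mat (R : realType) (d : nat) := idx d -> R.

Definition hamming (d : nat) (a b : idx d) : nat := #|[set i | a i != b i]|.

Definition setc (d : nat) (a : idx d) (i : 'I_d) (x : 'I_3) : idx d :=
  [ffun j => if j == i then x else a j].

Definition polystochastic (R : realType) (d : nat) (A : mat R d) : Prop :=
  (forall a, 0 <= A a) /\
  (forall (a : idx d) (i : 'I_d), \sum_(x < 3) A (setc a i x) = 1).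

Definition supp (R : realType) (d : nat) (A : mat R d) : {set idx d} :=
  [set a | A a != 0].

Definition Tset (d : nat) (a : idx d) : {set idx d} :=
  [set b | hamming a b == d].

Definition eps_sparse (R : realType) (eps : R) (d : nat) (S : {set idx d}) : Prop :=
  (forall a b, a \in S -> b \in S -> a != b -> eps * d%:R <= (hamming a b)%:R) /\
  (forall a, a \in S -> exists g : idx d, Tset g :&: S = [set a]).

From mathcomp Require Import all_boot all_order all_algebra.
From mathcomp Require Import all_classical all_reals all_analysis.
From mathcomp Require Import ring lra.
Set Implicit Arguments. Unset Strict Implicit. Unset Printing Implicit Defensive.
Import Order.TTheory GRing.Theory Num.Theory.
Local Open Scope ring_scope.

(* For a in S the tensor product peakT a, with factors 1 at a_i and -1/2 elsewhere,
   has zero line sums, equals 1 at a and has absolute value 2^-hamming(a,b) at b.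
   The dipole tensor dipoleT a' (gam a') also has zero line sums and, since gam a'
   witnesses the sparsity condition, vanishes on S except at a', where it is 1.
   Subtracting the values of peakT a at the other points of S with these dipoles
   gives delta_ext a: zero line sums, the indicator of a on S, and small elsewhere.
   The matrix A = (J - sum_(a in S) delta_ext a) / 3 thus has line sums 1 and
   vanishes on S; it is positive off S because the points of S are eps d apart,
   so at most one of them is close to any given b. *)

Section Hamming.
Variable d : nat.
Implicit Types a b c : idx d.

Lemma hammingC a b : hamming a b = hamming b a.
Proof. by apply: eq_card => i; rewrite !inE eq_sym. Qed.

Lemma hamming_triangle a b c : (hamming a c <= hamming a b + hamming b c)%N.
Proof.
apply: leq_trans (leq_card_setU _ _); apply: subset_leq_card.
by apply/fintype.subsetP => i; rewrite !inE; case: (eqVneq (a i) (b i)) => [->|].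
Qed.

Lemma hamming_gt0 a b : a != b -> (0 < hamming a b)%N.
Proof.
move=> neq_ab; rewrite card_gt0; apply/set0Pn.
case: (pickP [pred i | a i != b i]) => [i Hi|same]; first by exists i; rewrite inE.
by case/eqP: neq_ab; apply/ffunP => i; apply/eqP/negbFE/same.
Qed.

Lemma hamming_eq_dimP a b : reflect (forall i, a i != b i) (hamming a b == d).
Proof.
apply: (iffP eqP) => [full i | diff].
  have : [set i | a i != b i] = [set: 'I_d].
    apply/eqP; rewrite eqEcard finset.subsetT cardsT card_ord /=.
    by move: full; rewrite /hamming => ->.
  by move/finset.setP/(_ i); rewrite !inE.
by rewrite -[RHS]card_ord -cardsT; apply: eq_card => i; rewrite !inE diff.
Qed.

End Hamming.

Section Tensors.
Variables (R : realFieldType) (d : nat).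
Implicit Types a b c : idx d.

Definition tensor (f : 'I_d -> 'I_3 -> R) (b : idx d) : R := \prod_i f i (b i).

Lemma tensor_line_sum0 f b i :
  \sum_(x < 3) f i x = 0 -> \sum_(x < 3) tensor f (setc b i x) = 0.
Proof.
move=> fi0; under eq_bigr => x _ do rewrite /tensor (bigD1 i) //= ffunE eqxx.
under eq_bigr => x _ do under eq_bigr => j /negPf ji do rewrite ffunE ji.
by rewrite -big_distrl /= fi0 mul0r.
Qed.

Definition peak (a x : 'I_3) : R := if x == a then 1 else - 2^-1.

Definition dipole (a c x : 'I_3) : R :=
  if x == a then 1 else if x == c then 0 else -1.

Lemma peak_sum (a : 'I_3) : \sum_(x < 3) peak a x = 0.
Proof.
rewrite !big_ord_recr big_ord0 /= add0r /peak.
by case: a => [[|[|[|]]] ?] //=; rewrite /eq_op /=; lra.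
Qed.

Lemma dipole_sum (a c : 'I_3) : a != c -> \sum_(x < 3) dipole a c x = 0.
Proof.
rewrite !big_ord_recr big_ord0 /= add0r /dipole.
by case: a => [[|[|[|]]] ?] //=; case: c => [[|[|[|]]] ?] //=; rewrite /eq_op /=; lra.
Qed.

Definition peakT a : idx d -> R := tensor (fun i => peak (a i)).

Definition dipoleT a c : idx d -> R := tensor (fun i => dipole (a i) (c i)).

Lemma peakT_id a : peakT a a = 1.
Proof. by apply: big1 => i _; rewrite /peak eqxx. Qed.

Lemma norm_peakT a b : `|peakT a b| = (2 ^+ hamming a b)^-1.
Proof.
rewrite normr_prod (eq_bigr (fun i => if i \in [set i | a i != b i] then 2^-1 else 1)).
  by rewrite -big_mkcond /= prodr_const exprVn.
move=> i _; rewrite inE /peak eq_sym; case: ifP => _ /=; first by rewrite normr1.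
by rewrite normrN ger0_norm // invr_ge0.
Qed.

Lemma dipoleT_id a c : dipoleT a c a = 1.
Proof. by apply: big1 => i _; rewrite /dipole eqxx. Qed.

Lemma norm_dipoleT_le1 a c b : `|dipoleT a c b| <= 1.
Proof.
rewrite normr_prod; apply: prodr_ile1 => i _; rewrite normr_ge0 /= /dipole.
by case: ifP => _; last case: ifP => _; rewrite ?normr0 ?normrN ?normr1.
Qed.

Lemma dipoleT_eq0 a c b :
  (forall i, c i != a i) -> b \notin Tset c -> dipoleT a c b = 0.
Proof.
move=> ca; rewrite inE => /hamming_eq_dimP /forallP; rewrite negb_forall.
case/existsP => i /negbNE /eqP cbi.
by rewrite /dipoleT /tensor (bigD1 i) //= /dipole -cbi eqxx (negPf (ca i)) mul0r.
Qed.

Lemma peakT_line_sum a b i : \sum_(x < 3) peakT a (setc b i x) = 0.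
Proof. exact/tensor_line_sum0/peak_sum. Qed.

Lemma dipoleT_line_sum a c b i :
  (forall j, c j != a j) -> \sum_(x < 3) dipoleT a c (setc b i x) = 0.
Proof. by move=> ca; apply/tensor_line_sum0/dipole_sum; rewrite eq_sym ca. Qed.

End Tensors.

Lemma inv_exp2_le_half (R : numFieldType) k : (0 < k)%N -> (2 ^+ k)^-1 <= 2^-1 :> R.
Proof.
move=> k_gt0; rewrite lef_pV2 ?posrE ?exprn_gt0 //.
by rewrite -[leLHS]expr1 ler_eXn2l // ltr1n.
Qed.

Lemma inv_exp2_le_powR (R : realType) (r : R) m k :
  r / 4 * m%:R <= k%:R -> (2 ^+ k)^-1 <= ((2 : R) `^ (r / 4))^-1 ^+ m.
Proof.
move=> rmk; rewrite exprVn lef_pV2 ?posrE ?exprn_gt0 ?powR_gt0 //.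
rewrite -powR_mulrn ?powR_ge0 // -powRrM -(powR_mulrn k) //.
by apply: ler_powR => //; rewrite ler1n.
Qed.

Lemma sum_le_card_mul (R : numDomainType) (T : finType) (A : {set T}) (P : pred T)
    (f : T -> R) c :
  0 <= c -> (forall x, x \in A -> P x -> f x <= c) ->
  \sum_(x in A | P x) f x <= #|A|%:R * c.
Proof.
move=> c_ge0 fc; rewrite big_mkcondr mulr_natl -(sumr_const (mem A)).
by apply: ler_sum => x xA; case: ifP => Px; [exact: fc | exact: c_ge0].
Qed.

Lemma sparse_witness d (S : {set idx d}) :
  (forall a, a \in S -> exists g : idx d, Tset g :&: S = [set a]) ->
  exists gam : idx d -> idx d, forall a, a \in S -> Tset (gam a) :&: S = [set a].
Proof.
move=> wit; exists (fun a => odflt a [pick g | Tset g :&: S == [set a]]) => a aS.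
case: pickP => [g /eqP //|none].
by case: (wit a aS) => g gS; have := none g; rewrite gS eqxx.
Qed.

Section Construction.
Variables (R : realType) (d : nat) (S : {set idx d}) (gam : idx d -> idx d) (r : R).
Hypothesis gamP : forall a, a \in S -> Tset (gam a) :&: S = [set a].
Hypothesis S_sep : forall a b, a \in S -> b \in S -> a != b -> r <= (hamming a b)%:R.
Implicit Types a b : idx d.

Lemma gam_opposite a : a \in S -> forall i, gam a i != a i.
Proof.
move=> aS; apply/hamming_eq_dimP.
have : a \in Tset (gam a) :&: S by rewrite gamP // set11.
by rewrite !inE => /andP [].
Qed.

Lemma dipoleT_gam a a' : a \in S -> a' \in S -> dipoleT R a (gam a) a' = (a' == a)%:R.
Proof.
move=> aS a'S; case: eqVneq => [->|a'a]; first exact: dipoleT_id.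
apply: dipoleT_eq0; first exact: gam_opposite.
apply/negP => a'T; have : a' \in Tset (gam a) :&: S by rewrite inE a'T.
by rewrite gamP // inE (negPf a'a).
Qed.

Definition delta_ext a b : R :=
  peakT R a b - \sum_(a' in S | a' != a) peakT R a a' * dipoleT R a' (gam a') b.

Lemma delta_ext_onS a b : b \in S -> delta_ext a b = (b == a)%:R.
Proof.
move=> bS; rewrite /delta_ext.
under eq_bigr => a' /andP [a'S _] do rewrite dipoleT_gam //.
case: eqVneq => [->|ba].
  by rewrite peakT_id big1 ?subr0 // => a' /andP [_ a'a]; rewrite eq_sym (negPf a'a) mulr0.
rewrite (bigD1 b) ?bS ?ba //= eqxx mulr1 big1 ?addr0 ?subrr // => a' /andP [_ a'b].
by rewrite eq_sym (negPf a'b) mulr0.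
Qed.

Lemma delta_ext_line_sum a b i : \sum_(x < 3) delta_ext a (setc b i x) = 0.
Proof.
rewrite /delta_ext sumrB peakT_line_sum sub0r exchange_big big1 ?oppr0 //.
move=> a' /andP [a'S _].
by rewrite -mulr_sumr dipoleT_line_sum ?mulr0 //; exact: gam_opposite.
Qed.

Local Notation u := ((2 : R) `^ (r / 4))^-1.

Lemma norm_delta_ext a b :
  a \in S -> `|delta_ext a b| <= (2 ^+ hamming a b)^-1 + #|S|%:R * u ^+ 4.
Proof.
move=> aS; apply: le_trans (ler_normB _ _) _; rewrite norm_peakT lerD2l.
apply: le_trans (ler_norm_sum _ _ _) _.
apply: sum_le_card_mul; first by rewrite exprn_ge0 // invr_ge0 powR_ge0.
move=> a' a'S a'a; rewrite normrM norm_peakT.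
apply: le_trans (ler_piMr _ (norm_dipoleT_le1 _ _ _ _)) _.
  by rewrite invr_ge0 exprn_ge0.
apply: inv_exp2_le_powR; rewrite (_ : r / 4 * 4%:R = r); last by field.
by apply: S_sep; rewrite // eq_sym.
Qed.

Lemma sum_exp2_hamming_le b :
  b \notin S -> \sum_(a in S) (2 ^+ hamming a b)^-1 <= 2^-1 + #|S|%:R * u ^+ 2.
Proof.
move=> bS; have u2_ge0 : 0 <= u ^+ 2 by rewrite exprn_ge0 // invr_ge0 powR_ge0.
(* Points of S are r apart, so at most one of them lies within r/2 of b. *)
case: (boolP [exists a in S, (hamming a b)%:R < r / 2]) => [|/existsPn far].
  case/exists_inP => a0 a0S near; rewrite (bigD1 a0) //=; apply: lerD.
    by apply/inv_exp2_le_half/hamming_gt0; apply: contraNneq bS => <-.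
  apply: sum_le_card_mul => // a aS aa0; apply: inv_exp2_le_powR.
  have := S_sep aS a0S aa0.
  have : (hamming a a0)%:R <= (hamming a b)%:R + (hamming a0 b)%:R :> R.
    by rewrite -natrD ler_nat (hammingC a0); exact: hamming_triangle.
  lra.
apply: le_trans (_ : #|S|%:R * u ^+ 2 <= _); last by rewrite lerDr invr_ge0.
rewrite mulr_natl -(sumr_const (mem S)); apply: ler_sum => a aS.
by apply: inv_exp2_le_powR; have := far a; rewrite aS /= -leNgt; lra.
Qed.

Hypothesis pow_ge8 : 8 <= (2 : R) `^ (r / 4).
Hypothesis card_S_le : #|S|%:R <= (2 : R) `^ (r / 4).

Definition matA : mat R d := fun b => 3^-1 * (1 - \sum_(a in S) delta_ext a b).

Lemma matA_line_sum b i : \sum_(x < 3) matA (setc b i x) = 1.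
Proof.
rewrite /matA -mulr_sumr sumrB sumr_const card_ord exchange_big /=.
by rewrite big1 ?subr0 => [|a _]; [rewrite mulVf ?pnatr_eq0 | exact: delta_ext_line_sum].
Qed.

Lemma matA_onS b : b \in S -> matA b = 0.
Proof.
move=> bS; rewrite /matA (bigD1 b) //= delta_ext_onS // eqxx big1 ?addr0 ?subrr ?mulr0 //.
by move=> a /andP [_ ab]; rewrite delta_ext_onS // eq_sym (negPf ab).
Qed.

Lemma matA_gt0 b : b \notin S -> 0 < matA b.
Proof.
move=> bS; rewrite /matA pmulr_rgt0 ?invr_gt0 // subr_gt0.
set N : R := #|S|%:R.
have u_ge0 : 0 <= u by rewrite invr_ge0 powR_ge0.
have u_le : u <= 8^-1 by rewrite lef_pV2 ?posrE ?powR_gt0.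
have Nu_le1 : N * u <= 1 by rewrite ler_pdivrMr ?powR_gt0 // mul1r.
have Nu2 : N * u ^+ 2 <= u by rewrite expr2 mulrA ler_piMl.
have NNu4 : N * (N * u ^+ 4) <= u ^+ 2.
  rewrite (_ : N * (N * u ^+ 4) = (N * u) ^+ 2 * u ^+ 2); last by ring.
  by rewrite ler_piMl ?exprn_ge0 ?exprn_ile1 ?mulr_ge0 ?ler0n.
have u2 : u ^+ 2 <= u by rewrite expr2 ler_piMl //; lra.
(* The bounds below sum to at most 1/2 + u + u^2, which is < 1 as u <= 1/8. *)
apply: le_lt_trans (ler_norm _) _; apply: le_lt_trans (ler_norm_sum _ _ _) _.
apply: le_lt_trans (_ : \sum_(a in S) ((2 ^+ hamming a b)^-1 + N * u ^+ 4) < 1).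
  by apply: ler_sum => a aS; exact: norm_delta_ext.
rewrite big_split /= sumr_const -[_ *+ #|S|]mulr_natl -/N.
have := sum_exp2_hamming_le bS; rewrite -/N; lra.
Qed.

Lemma exists_polystochastic_supp_setC :
  exists A : mat R d, polystochastic A /\ supp A = ~: S.
Proof.
exists matA; split; [split|].
- move=> b; case: (boolP (b \in S)) => bS; first by rewrite matA_onS.
  exact/ltW/matA_gt0.
- exact: matA_line_sum.
- apply/finset.setP => b; rewrite !inE; case: (boolP (b \in S)) => bS /=.
    by rewrite matA_onS ?eqxx.
  by rewrite gt_eqF // matA_gt0.
Qed.

End Construction.

Theorem lemma1 (R : realType) (eps : R) (d : nat) (S : {set idx d}) :
  0 < eps -> eps < 1 ->
  14 / eps <= d%:R ->
  eps_sparse eps S ->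
  (#|S|%:R <= (2 : R) `^ (eps * d%:R / 4)) ->
  exists A : mat R d, polystochastic A /\ supp A = ~: S.
Proof.
move=> eps_gt0 _ d_ge [sep wit] card_S_le.
have [gam gamP] := sparse_witness wit.
apply: (exists_polystochastic_supp_setC gamP sep) => //.
have r_ge14 : 14 <= eps * d%:R by rewrite mulrC -ler_pdivrMr.
rewrite (_ : 8 = 2 `^ 3%:R); last by rewrite powR_mulrn // !exprS expr0; lra.
by apply: ler_powR; [rewrite ler1n | lra].
Qed.
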